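(* For $m\ge 3$ groups, Algorithm MULTI-GROUP is not an $(8-\varepsilon)$-approximation algorithm for the fair $k$-center problem for any $\varepsilon>0$: for every $\varepsilon>0$ there is an instance and a resolution of the algorithm's arbitrary choices (tie-breaking in GREEDY, in cluster assignment, in the choice of exchanged elements, and of the arbitrary added elements) such that the output $C^A$ satisfies $\max_{s\in S}d(s,C^A\cup C_0)>(8-\varepsilon)\,r^*_{\mathrm{fair}}$.
   Context: Fair $k$-center problem: $S$ finite with metric $d$, partitioned into groups $S_1,\dots,S_m$; given $k_{S_i}\in\mathbb{N}_0$ with $\sum_i k_{S_i}=k$ and $C_0\subseteq S$. Feasible: $C\subseteq S$, $|C\cap S_i|=k_{S_i}$ for all $i$; cost $\max_{s\in S}d(s,C\cup C_0)$ with $d(s,A)=\min_{a\in A}d(s,a)$, $d(s,\emptyset)=+\infty$; $r^*_{\mathrm{fair}}$ is the optimal cost. $\mathrm{GREEDY}(X,d,k',C')$: start with $C=\emptyset$; for $i=1,\dots,k'$ choose any $c_i\in\arg\max_{s\in X}d(s,C\cup C')$, add it to $C$; output $C$. Algorithm EXCHANGE (input: centers $\tilde c_1,\dots,\tilde c_k$, clusters $L_1,\dots,L_k$ with $\tilde c_i\in L_i$, targets $k_{S_j}$): set $\tilde k_{S_j}=\#\{i:\tilde c_i\in S_j\}$; directed graph $G$ on $\{S_1,\dots,S_m\}$ with $S_i\to S_j$ iff some $t$ has $\tilde c_t\in S_i$ and $L_t\cap S_j\ne\emptyset$. While some $\tilde k_{S_j}\neq k_{S_j}$ and there are $S_r,S_s$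 with $\tilde k_{S_r}>k_{S_r}$, $\tilde k_{S_s}<k_{S_s}$ joined by a directed path in $G$: along a shortest such path $S_{v_0}\cdots S_{v_w}$, for $l=0,\dots,w-1$ replace the center $\tilde c_t\in S_{v_l}$ of some cluster $L_t$ containing some $y\in S_{v_{l+1}}$ by $y$; update $\tilde k_{S_r}\mathrel{-}=1$, $\tilde k_{S_s}\mathrel{+}=1$, recompute $G$. Then return $\mathcal{G}=\emptyset$ if all $\tilde k_{S_j}=k_{S_j}$, else $\mathcal{G}=\mathcal{G}'\cup\{$groups reachable in $G$ from $\mathcal{G}'\}$ with $\mathcal{G}'=\{S_j:\tilde k_{S_j}>k_{S_j}\}$. Clusters never change under replacements. Algorithm MULTI-GROUP (recursive): (1) run $\mathrm{GREEDY}(S,d,k,C_0)$ to get $\tilde c_1,\dots,\tilde c_k$; if $m=1$ return them. (2) Assign each $s\in S$ to a closest center in $\{\tilde c_i\}\cup C_0$, giving clusters $L_i$ for $\tilde c_i$; apply EXCHANGE; if $\mathcal{G}=\emptyset$ return the updated centers. (3) Else let $S'=\bigcup_{i:\tilde c_i\text{ in a group of }\mathcal{G}}L_i$, $C'=\{\tilde c_i \text{ in groups not in }\mathcal{G}\}$; recursively run MULTI-GROUP on $S'\cup C'\cup C_0$ with the groups in $\mathcal{G}$ (elements of $C'\cup C_0$ assigned to an arbitrary group in $\mathcal{G}$), requested numbers $k_{S_j}$ for $S_j\in\mathcal{G}$, initial centers $C'\cup C_0$, output $\widehat C^R$. (4) Return $\widehat C^R\cup C'$ plus, for each group $S_j\notin\mathcal{G}$,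 $k_{S_j}-|C'\cap S_j|$ arbitrary further elements of $S_j$. *)

(* Formalization of Algorithm MULTI-GROUP (fair k-center)
   as a relation capturing all its arbitrary choices. *)
From HB Require Import structures.
From mathcomp Require Import all_boot all_order all_algebra.
Set Implicit Arguments. Unset Strict Implicit. Unset Printing Implicit Defensive.
Import Order.TTheory GRing.Theory Num.Theory.
Local Open Scope ring_scope.

Section FairKCenter.
Variable R : realFieldType.
Variable T : finType.
Variable m : nat.
Variable d : T -> T -> R.

(* Extended nonnegative values: [None] stands for +infinity. *)
Definition ole (x y : option R) : bool :=
  match x, y with
  | _, None => true
  | None, Some _ => false
  | Some a, Some b => a <= b
  end.
Definition olt (x y : option R) : bool :=
  match x, y with
  | Some a, Some b => a < b
  | Some _, None => true
  | None, _ => false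
  end.
Definition omin (x y : option R) : option R :=
  match x, y with
  | None, _ => y
  | _, None => x
  | Some a, Some b => Some (Num.min a b)
  end.
Definition omax (x y : option R) : option R :=
  match x, y with
  | None, _ => None
  | _, None => None
  | Some a, Some b => Some (Num.max a b)
  end.
Definition oscale (c : R) (x : option R) : option R :=
  match x with None => None | Some a => Some (c * a) end.

Definition is_metric : Prop :=
  [/\ forall x, d x x = 0,
      forall x y, d x y = d y x,
      forall x y, d x y = 0 -> x = y
    & forall x y z, d x z <= d x y + d y z].

(* d(s, A) = min_{a in A} d(s,a), with d(s, emptyset) = +infinity *)
Definition dist (s : T) (A : {set T}) : option R :=
  \big[omin/None]_(c in A) Some (d s c).

Definition cost (S A : {set T}) : option R :=
  \big[omax/Some 0]_(s in S) dist s A.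

(* groups are given by grp : T -> 'I_m ; S_j = [set x | grp x == j] *)
Definition feasible (grp : T -> 'I_m) (kreq : 'I_m -> nat) (C : {set T}) : bool :=
  [forall j, #|C :&: [set x | grp x == j]| == kreq j].

(* r*_fair : optimal cost over feasible C (instance point set = all of T) *)
Definition r_fair (grp : T -> 'I_m) (kreq : 'I_m -> nat) (C0 : {set T}) : option R :=
  \big[omin/None]_(C : {set T} | feasible grp kreq C) cost [set: T] (C :|: C0).

Definition ksum (kreq : 'I_m -> nat) (Gs : {set 'I_m}) : nat :=
  (\sum_(j in Gs) kreq j)%N.

Definition greedy_prefix k (cs : k.-tuple T) (i : 'I_k) : {set T} :=
  [set tnth cs j | j : 'I_k & (j < i)%N].

Definition greedy (S C' : {set T}) k (cs : k.-tuple T) : Prop :=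
  forall i : 'I_k,
    tnth cs i \in S /\
    forall x, x \in S ->
      ole (dist x (greedy_prefix cs i :|: C'))
          (dist (tnth cs i) (greedy_prefix cs i :|: C')).

Definition centers k (cs : k.-tuple T) : {set T} := [set tnth cs i | i : 'I_k].

(* Assignment of each s in S to a closest center in {c_i} u C0
   (a s = Some i : cluster L_i of c_i ; a s = None : a center of C0);
   the EXCHANGE precondition c_i \in L_i is required. *)
Definition closest_assign (S C0 : {set T}) k (cs : k.-tuple T)
    (a : T -> option 'I_k) : Prop :=
  (forall s, s \in S ->
     match a s with
     | Some i => forall c, c \in centers cs :|: C0 -> d s (tnth cs i) <= d s c
     | None => exists2 c0, c0 \in C0 &
                 forall c, c \in centers cs :|: C0 -> d s c0 <= d s c
     end)
  /\ (forall i : 'I_k, a (tnth cs i) = Some i).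

Definition cluster (S : {set T}) k (a : T -> option 'I_k) (i : 'I_k) : {set T} :=
  [set s in S | a s == Some i].

Section Exchange.
Variables (S : {set T}) (grp : T -> 'I_m) (Gs : {set 'I_m})
          (kreq : 'I_m -> nat) (k : nat) (a : T -> option 'I_k).

Definition ktilde (cs : k.-tuple T) (j : 'I_m) : nat :=
  #|[set i : 'I_k | grp (tnth cs i) == j]|.

Definition edge (cs : k.-tuple T) : rel 'I_m :=
  fun j1 j2 => [exists t : 'I_k,
                  (grp (tnth cs t) == j1) &&
                  [exists y in cluster S a t, grp y == j2]].

Definition replace_step (cs cs' : k.-tuple T) (v w : 'I_m) : Prop :=
  exists t : 'I_k, exists y : T,
    [/\ grp (tnth cs t) = v, y \in cluster S a t, grp y = w
      & forall i, tnth cs' i = if i == t then y else tnth cs i].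

Inductive chain : seq 'I_m -> k.-tuple T -> k.-tuple T -> Prop :=
| chain_one v cs : chain [:: v] cs cs
| chain_cons v w p cs cs1 cs2 :
    replace_step cs cs1 v w -> chain (w :: p) cs1 cs2 ->
    chain [:: v, w & p] cs cs2.

Definition shortest_path (e : rel 'I_m) (r s : 'I_m) (p : seq 'I_m) : Prop :=
  [/\ path e r p, last r p = s &
      forall p', path e r p' -> last r p' = s -> (size p <= size p')%N].

Definition exchange_possible (cs : k.-tuple T) : Prop :=
  exists r s, [/\ r \in Gs, s \in Gs, (kreq r < ktilde cs r)%N,
                  (ktilde cs s < kreq s)%N & connect (edge cs) r s].

Inductive exchange : k.-tuple T -> k.-tuple T -> Prop :=
| ex_stop cs : ~ exchange_possible cs -> exchange cs cs
| ex_step cs cs1 cs2 r s p :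
    r \in Gs -> s \in Gs -> (kreq r < ktilde cs r)%N -> (ktilde cs s < kreq s)%N ->
    shortest_path (edge cs) r s p ->
    chain (r :: p) cs cs1 ->
    exchange cs1 cs2 -> exchange cs cs2.

Definition exG (cs : k.-tuple T) : {set 'I_m} :=
  if [forall j in Gs, ktilde cs j == kreq j] then set0
  else [set j in Gs | [exists i in Gs,
                         (kreq i < ktilde cs i)%N && connect (edge cs) i j]].

End Exchange.

Definition Sprime (S : {set T}) (grp : T -> 'I_m) k (a : T -> option 'I_k)
    (cs : k.-tuple T) (G : {set 'I_m}) : {set T} :=
  \bigcup_(i : 'I_k | grp (tnth cs i) \in G) cluster S a i.

Definition Cprime (grp : T -> 'I_m) k (cs : k.-tuple T) (G : {set 'I_m}) : {set T} :=
  [set tnth cs i | i : 'I_k & grp (tnth cs i) \notin G].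

Definition grpset (S : {set T}) (grp : T -> 'I_m) (j : 'I_m) : {set T} :=
  [set x in S | grp x == j].

(* multigroup kreq S grp Gs C0 out : "out is a possible output of MULTI-GROUP
   on point set S, groups Gs (membership given by grp), requested numbers kreq,
   initial centers C0" *)
Inductive multigroup (kreq : 'I_m -> nat) :
    {set T} -> (T -> 'I_m) -> {set 'I_m} -> {set T} -> {set T} -> Prop :=
| mg_single S grp Gs C0 (cs : (ksum kreq Gs).-tuple T) :
    #|Gs| = 1%N -> greedy S C0 cs ->
    multigroup kreq S grp Gs C0 (centers cs)
| mg_exch S grp Gs C0 (cs cs' : (ksum kreq Gs).-tuple T) a :
    #|Gs| != 1%N -> greedy S C0 cs -> closest_assign S C0 cs a ->
    exchange S grp Gs kreq a cs cs' ->
    exG S grp Gs kreq a cs' = set0 ->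
    multigroup kreq S grp Gs C0 (centers cs')
| mg_rec S grp Gs C0 (cs cs' : (ksum kreq Gs).-tuple T) a G grp' CR
         (E : 'I_m -> {set T}) :
    #|Gs| != 1%N -> greedy S C0 cs -> closest_assign S C0 cs a ->
    exchange S grp Gs kreq a cs cs' ->
    exG S grp Gs kreq a cs' = G -> G != set0 ->
    (forall x, x \in Cprime grp cs' G :|: C0 -> grp' x \in G) ->
    (forall x, x \notin Cprime grp cs' G :|: C0 -> grp' x = grp x) ->
    multigroup kreq (Sprime S grp a cs' G :|: Cprime grp cs' G :|: C0) grp' G
               (Cprime grp cs' G :|: C0) CR ->
    (forall j, j \in Gs :\: G ->
       E j \subset grpset S grp j :\: Cprime grp cs' G /\
       #|E j| = (kreq j - #|Cprime grp cs' G :&: grpset S grp j|)%N) ->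
    multigroup kreq S grp Gs C0
               (CR :|: Cprime grp cs' G :|: \bigcup_(j in Gs :\: G) E j).

End FairKCenter.

From HB Require Import structures.
From mathcomp Require Import all_boot all_order all_algebra.
Set Implicit Arguments. Unset Strict Implicit. Unset Printing Implicit Defensive.
Import Order.TTheory GRing.Theory Num.Theory.
Local Open Scope ring_scope.

(* The proof exhibits one instance and one admissible run.  There are eight core
   points 0..7 with the integer distances of [dtab], lying in groups 0, 1, 2 with
   requests (1, 1, 3), and one padding point per group, far from everything and put
   into C0 (so every group is nonempty and padding points cost nothing).  GREEDY picks
   0, 7, 6, 5, 4; EXCHANGE swaps 0 for 3 and gets stuck with groups {0, 1} in surplus,
   so MULTI-GROUP recurses on their clusters with C' = {3}.  There GREEDY picks 6, 4 and
   EXCHANGE swaps 6 for 5; finally 1, 2 are added to group 2.  The output {5,4,3,1,2}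
   leaves point 7 at distance 8, whereas the fair solution {6,7,3,1,2} has radius 1. *)

Section ExtendedOrder.
Variable R : realFieldType.
Implicit Types (x y z : option R) (a b c : R).

Lemma ole_refl x : ole x x.
Proof. by case: x => [a|] /=. Qed.

Lemma ole_trans x y z : ole x y -> ole y z -> ole x z.
Proof. by case: x => [a|]; case: y => [b|]; case: z => [c|] //=; exact: le_trans. Qed.

Lemma ole_Some_anti a x : ole (Some a) x -> ole x (Some a) -> x = Some a.
Proof. by case: x => [b|] //= ab ba; rewrite (@le_anti _ _ b a) // ab ba. Qed.

Lemma ole_minl x y : ole (omin x y) x.
Proof. by case: x => [a|]; case: y => [b|] //=; rewrite ?ge_min ?lexx. Qed.

Lemma ole_minr x y : ole (omin x y) y.
Proof. by case: x => [a|]; case: y => [b|] //=; rewrite ?ge_min ?lexx ?orbT. Qed.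

Lemma ole_min z x y : ole z x -> ole z y -> ole z (omin x y).
Proof.
by case: x => [a|]; case: y => [b|]; case: z => [c|] //= zx zy; rewrite ?le_min ?zx ?zy.
Qed.

Lemma ole_maxl x y : ole x (omax x y).
Proof. by case: x => [a|]; case: y => [b|] //=; rewrite ?le_max ?lexx. Qed.

Lemma ole_maxr x y : ole y (omax x y).
Proof. by case: x => [a|]; case: y => [b|] //=; rewrite ?le_max ?lexx ?orbT. Qed.

Lemma ole_max z x y : ole x z -> ole y z -> ole (omax x y) z.
Proof.
by case: x => [a|]; case: y => [b|]; case: z => [c|] //= xz yz; rewrite ?ge_max ?xz ?yz.
Qed.

Variable I : finType.
Implicit Types (P : pred I) (F : I -> option R).

Lemma bigomin_le P F i : P i -> ole (\big[@omin R/None]_(j | P j) F j) (F i).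
Proof.
move=> Pi; rewrite unlock; have : i \in index_enum I by rewrite mem_index_enum.
elim: (index_enum I) => [|h t IH] //=; rewrite inE => /orP [/eqP <-|it].
  by rewrite Pi; exact: ole_minl.
by case: (P h); [exact: ole_trans (ole_minr _ _) (IH it) | exact: IH].
Qed.

Lemma bigomin_ge P F z :
  (forall i, P i -> ole z (F i)) -> ole z (\big[@omin R/None]_(i | P i) F i).
Proof.
move=> zF; apply: (big_ind (fun o => ole z o)) => //; first by case: z {zF}.
by move=> x y; exact: ole_min.
Qed.

Lemma bigomax_ge P F i z :
  P i -> ole z (F i) -> ole z (\big[@omax R/Some 0]_(j | P j) F j).
Proof.
move=> Pi zFi; rewrite unlock; have : i \in index_enum I by rewrite mem_index_enum.
elim: (index_enum I) => [|h t IH] //=; rewrite inE => /orP [/eqP <-|it].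
  by rewrite Pi; exact: ole_trans zFi (ole_maxl _ _).
by case: (P h); [exact: ole_trans (IH it) (ole_maxr _ _) | exact: IH].
Qed.

Lemma bigomax_le P F z :
  ole (Some 0) z -> (forall i, P i -> ole (F i) z) ->
  ole (\big[@omax R/Some 0]_(i | P i) F i) z.
Proof. by move=> z0 Fz; apply: (big_ind (fun o => ole o z)) => // x y; exact: ole_max. Qed.

(* Because the neutral element of [omax] is [Some 0], costs are never negative. *)
Lemma bigomax_ge0 P F : ole (Some 0) (\big[@omax R/Some 0]_(i | P i) F i).
Proof.
apply: (big_rec (fun o => ole (Some 0) o)) => [|i x _ x0]; first exact: ole_refl.
exact: ole_trans x0 (ole_maxr _ _).
Qed.

Lemma ratio_exceeds rho eps (opt c : option R) :
  0 < rho -> 0 < eps -> ole (Some 0) opt -> ole opt (Some 1) -> ole (Some rho) c ->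
  olt (oscale (rho - eps) opt) c.
Proof.
move=> rho_gt0 eps_gt0; case: opt => [r|] //= r_ge0 r_le1; case: c => [w|] //= rho_le_w.
apply: lt_le_trans rho_le_w; have [eps_le_rho|rho_lt_eps] := lerP eps rho.
  apply: (@le_lt_trans _ _ (rho - eps)); last by rewrite ltrBlDr ltrDl.
  by rewrite -[leRHS]mulr1 ler_wpM2l // subr_ge0.
apply: le_lt_trans rho_gt0; apply: mulr_le0_ge0 => //.
by rewrite subr_le0 ltW.
Qed.

End ExtendedOrder.

Section KCenterFacts.
Variables (R : realFieldType) (T : finType) (m : nat) (d : T -> T -> R).

Lemma dist_antitone s (A B : {set T}) : A \subset B -> ole (dist d s B) (dist d s A).
Proof. by move=> AB; apply: bigomin_ge => c cA; exact: bigomin_le (subsetP AB c cA). Qed.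

(* The constructors of [multigroup] use tuples of the dependent length [ksum kreq Gs];
   these variants accept tuples of any length equal to it, e.g. built from a list. *)
Lemma multigroup_exch_at (kreq : 'I_m -> nat) S grp Gs C0 n (cs cs' : n.-tuple T)
    (a : T -> option 'I_n) :
  ksum kreq Gs = n -> #|Gs| != 1%N -> greedy d S C0 cs -> closest_assign d S C0 cs a ->
  exchange S grp Gs kreq a cs cs' -> exG S grp Gs kreq a cs' = set0 ->
  multigroup d kreq S grp Gs C0 (centers cs').
Proof. by move=> ksum_n; subst n; exact: mg_exch. Qed.

Lemma multigroup_rec_at kreq S grp Gs C0 n (cs cs' : n.-tuple T)
    (a : T -> option 'I_n) G (grp' : T -> 'I_m) CR (E : 'I_m -> {set T}) :
  ksum kreq Gs = n -> #|Gs| != 1%N -> greedy d S C0 cs -> closest_assign d S C0 cs a ->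
  exchange S grp Gs kreq a cs cs' -> exG S grp Gs kreq a cs' = G -> G != set0 ->
  (forall x, x \in Cprime grp cs' G :|: C0 -> grp' x \in G) ->
  (forall x, x \notin Cprime grp cs' G :|: C0 -> grp' x = grp x) ->
  multigroup d kreq (Sprime S grp a cs' G :|: Cprime grp cs' G :|: C0) grp' G
             (Cprime grp cs' G :|: C0) CR ->
  (forall j, j \in Gs :\: G ->
     E j \subset grpset S grp j :\: Cprime grp cs' G /\
     #|E j| = (kreq j - #|Cprime grp cs' G :&: grpset S grp j|)%N) ->
  multigroup d kreq S grp Gs C0 (CR :|: Cprime grp cs' G :|: \bigcup_(j in Gs :\: G) E j).
Proof. by move=> ksum_n; subst n; exact: mg_rec. Qed.

End KCenterFacts.

Section FiniteChecks.

Lemma all_iota_ord k (P : pred nat) : all P (iota 0 k) -> forall i : 'I_k, P i.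
Proof. by move=> /allP allP i; apply: allP; rewrite mem_iota /= ltn_ord. Qed.

Lemma all_iota_ord2 k (P : nat -> nat -> bool) :
  all (fun a => all (P a) (iota 0 k)) (iota 0 k) -> forall a b : 'I_k, P a b.
Proof. by move=> allP a b; exact: all_iota_ord (all_iota_ord allP a) b. Qed.

Lemma all_iota_ord3 k (P : nat -> nat -> nat -> bool) :
  all (fun a => all (fun b => all (P a b) (iota 0 k)) (iota 0 k)) (iota 0 k) ->
  forall a b c : 'I_k, P a b c.
Proof. by move=> allP a b c; exact: all_iota_ord (all_iota_ord2 allP a b) c. Qed.

Lemma card_nth_count (Q : pred nat) (l : seq nat) k : size l = k ->
  #|[set i : 'I_k | Q (nth 0%N l i)]| = count Q l.
Proof.
move=> <-; rewrite cardsE cardE /enum_mem size_filter -enumT.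
rewrite -(count_map val (fun n => Q (nth 0%N l n))) val_enum_ord.
by rewrite -[in RHS](mkseq_nth 0%N l) /mkseq count_map.
Qed.

Lemma connect_forward_closed (I : finType) (e : rel I) (P : pred I) :
  (forall x y, P x -> e x y -> P y) -> forall x y, P x -> connect e x y -> P y.
Proof.
move=> closedP x y Px /connectP [p pth ->].
elim: p x Px pth => //= z p IH x Px /andP [exz pth].
exact: IH (closedP _ _ Px exz) pth.
Qed.

Lemma foldr_minn_le_mem (z x : nat) (s : seq nat) : x \in s -> (foldr minn z s <= x)%N.
Proof.
elim: s => //= h t IH; rewrite inE => /orP [/eqP ->|xt]; first by rewrite geq_minl.
exact: leq_trans (geq_minr _ _) (IH xt).
Qed.

Lemma foldr_minn_le_seed (z : nat) (s : seq nat) : (foldr minn z s <= z)%N.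
Proof. by elim: s => //= h t IH; exact: leq_trans (geq_minr _ _) IH. Qed.

Lemma foldr_minn_attained (z : nat) (s : seq nat) :
  foldr minn z s = z \/ foldr minn z s \in s.
Proof.
elim: s => [|h t IH] /=; first by left.
have [h_le|_] := leqP h (foldr minn z t); first by right; rewrite inE eqxx.
by case: IH => [->|mt]; [left | right; rewrite inE mt orbT].
Qed.

End FiniteChecks.

Section Instance.
Variables (R : realFieldType) (m' : nat).
Local Notation M := m'.+3.

(* Points: eight core points [inl c] and one padding point [inr j] per group [j]. *)
Local Notation T := ('I_8 + 'I_M)%type.

Definition dtab : seq (seq nat) :=
  [:: [:: 0;1;1;2;2;2;6;10]; [:: 1;0;2;3;1;3;7;11]; [:: 1;2;0;3;3;1;5;9];
      [:: 2;3;3;0;4;4;8;8]; [:: 2;1;3;4;0;4;8;12]; [:: 2;3;1;4;4;0;4;8];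
      [:: 6;7;5;8;8;4;0;4]; [:: 10;11;9;8;12;8;4;0]].

Definition dcore (a b : nat) : nat := nth 0%N (nth [::] dtab a) b.

Definition dnat (x y : T) : nat :=
  match x, y with
  | inl a, inl b => dcore a b
  | inr i, inr j => if i == j then 0%N else 100%N
  | _, _ => 100%N
  end.

Definition dex (x y : T) : R := (dnat x y)%:R.

Lemma dcore_le100 (a b : 'I_8) : (dcore a b <= 100)%N.
Proof. exact: (all_iota_ord2 (k := 8) (P := fun a b => dcore a b <= 100)%N erefl). Qed.

Lemma dcore_self (a : 'I_8) : dcore a a = 0%N.
Proof. exact/eqP/(all_iota_ord (k := 8) (P := fun a => dcore a a == 0)%N erefl). Qed.

Lemma dex_metric : is_metric dex.
Proof.
rewrite /dex; split.
- by case=> [a|j] /=; rewrite ?dcore_self ?eqxx.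
- case=> [a|i] [b|j] //=; last by rewrite eq_sym.
  have := all_iota_ord2 (k := 8) (P := fun a b => dcore a b == dcore b a)%N erefl a b.
  by move/eqP ->.
- move=> x y /eqP; rewrite pnatr_eq0 => /eqP.
  case: x => [a|i]; case: y => [b|j] //=; last by case: eqP => [->|].
  move=> dab0; congr inl; apply/val_inj/eqP.
  have := all_iota_ord2 (k := 8)
    (P := fun a b => (dcore a b == 0) ==> (a == b))%N erefl a b.
  by rewrite dab0.
- move=> x y z; rewrite -natrD ler_nat.
  case: x => [a|i]; case: y => [b|j]; case: z => [c|k] /=;
    rewrite ?leq_addl ?leq_addr //; try by case: eqP.
  + exact: (all_iota_ord3 (k := 8)
      (P := fun a b c => dcore a c <= dcore a b + dcore b c)%N erefl).
  + exact: leq_trans (dcore_le100 a c) (leq_addr _ _).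
  + case: (eqVneq i k) => [->|ik] //=; case: (eqVneq i j) => [ij|] //=.
    by subst j; rewrite (negPf ik).
Qed.

Definition padded (P : pred nat) : {set T} :=
  [set x : T | if x is inl c then P c else true].
Definition core (P : pred nat) : {set T} :=
  [set x : T | if x is inl c then P c else false].

Definition pt (n : nat) : T := inl (inord n).

Lemma inl_eq_pt (c : 'I_8) n : (n < 8)%N -> (inl c == pt n :> T) = (val c == n).
Proof.
move=> n_lt8; apply/eqP/eqP => [[->]|cn]; first exact: inordK.
by congr inl; apply: val_inj; rewrite /= inordK.
Qed.

Lemma card_core (P : pred nat) : #|core P| = count P (iota 0 8).
Proof.
have -> : core P = inl @: [set i : 'I_8 | P i].
  apply/setP => x; rewrite !inE; apply/idP/imsetP.
    by case: x => [c|] //= Pc; exists c; rewrite ?inE.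
  by move=> [c]; rewrite inE => Pc ->.
rewrite card_imset; last by move=> x y [].
rewrite -[RHS](card_nth_count P (size_iota 0 8)).
by apply: eq_card => i; rewrite !inE nth_iota.
Qed.

Definition dcore_to (a : nat) (P : pred nat) : nat :=
  foldr minn 100 [seq dcore a j | j <- iota 0 8 & P j].

Lemma dist_pad_padded j P : dist dex (inr j) (padded P) = Some 0.
Proof.
apply: ole_Some_anti; first by apply: bigomin_ge => c _ /=; rewrite ler0n.
have := @bigomin_le R _ (fun c => c \in padded P) (fun c => Some (dex (inr j) c)) (inr j).
by rewrite inE /dex /= eqxx => /(_ isT).
Qed.

Lemma dist_core_padded (a : 'I_8) P : dist dex (inl a) (padded P) = Some (dcore_to a P)%:R.
Proof.
pose F c := Some (dex (inl a) c).
apply: ole_Some_anti.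
  apply: bigomin_ge => -[b|j]; rewrite inE /= /dex ler_nat; last first.
    by move=> _; exact: foldr_minn_le_seed.
  move=> Pb; apply/foldr_minn_le_mem/map_f.
  by rewrite mem_filter Pb mem_iota /= ltn_ord.
rewrite /dcore_to.
have [->|] := foldr_minn_attained 100 [seq dcore a j | j <- iota 0 8 & P j].
  have := @bigomin_le R _ (fun c => c \in padded P) F (inr ord0).
  by rewrite inE => /(_ isT).
move=> /mapP [j]; rewrite mem_filter mem_iota /= => /andP [Pj j_lt8] ->.
have := @bigomin_le R _ (fun c => c \in padded P) F (inl (inord j)).
by rewrite inE /F /dex /= inordK // => /(_ Pj).
Qed.

Definition pts (k : nat) (l : seq nat) : k.-tuple T := [tuple pt (nth 0%N l i) | i < k].

Lemma tnth_pts k l (i : 'I_k) : tnth (pts k l) i = pt (nth 0%N l i).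
Proof. exact: tnth_mktuple. Qed.

Definition chosen (A0 : pred nat) (l : seq nat) (i : nat) : pred nat :=
  fun c => A0 c || (c \in take i l).

Section ListedCenters.
Variables (k : nat) (l : seq nat).
Hypothesis l_size : size l = k.
Hypothesis l_core : all (fun n => n < 8)%N l.
Variables (g : T -> 'I_M) (gcore : nat -> nat).
Hypothesis g_core : forall c : 'I_8, val (g (inl c)) = gcore c.
Variables (an : nat -> option nat) (a : T -> option 'I_k).
Hypothesis a_core : forall c : 'I_8, omap val (a (inl c)) = an c.
Hypothesis a_pad : forall j, a (inr j) = None.

Lemma nth_core (i : 'I_k) : (nth 0%N l i < 8)%N.
Proof. by apply: (allP l_core); rewrite mem_nth ?l_size. Qed.

Lemma prefix_padded (A0 : pred nat) (i : 'I_k) :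
  greedy_prefix (pts k l) i :|: padded A0 = padded (chosen A0 l i).
Proof.
apply/setP => -[c|j]; rewrite !inE /chosen /= ?orbT // orbC; congr orb.
apply/imsetP/idP => [[j]|/(nthP 0%N) [j]].
  rewrite inE => ji; rewrite tnth_pts => /eqP; rewrite inl_eq_pt ?nth_core // => /eqP ->.
  by rewrite -(nth_take 0%N ji) mem_nth // size_take l_size ltn_ord.
rewrite size_take l_size ltn_ord => ji.
have jk : (j < k)%N := ltn_trans ji (ltn_ord i).
have jl : (j < size l)%N by rewrite l_size.
rewrite nth_take // => lj; exists (Ordinal jk); first by rewrite inE.
by apply/eqP; rewrite tnth_pts inl_eq_pt /= lj.
Qed.

Lemma centers_padded (A0 : pred nat) :
  centers (pts k l) :|: padded A0 = padded (fun c => A0 c || (c \in l)).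
Proof.
apply/setP => -[c|j]; rewrite !inE /= ?orbT // orbC; congr orb.
apply/imsetP/idP => [[j _]|/(nthP 0%N) [j jl lj]].
  rewrite tnth_pts => /eqP; rewrite inl_eq_pt ?nth_core // => /eqP ->.
  by rewrite mem_nth ?l_size.
have jk : (j < k)%N by rewrite -l_size.
by exists (Ordinal jk) => //; apply/eqP; rewrite tnth_pts inl_eq_pt /= lj.
Qed.

Lemma greedy_padded (S A0 : pred nat) :
  all (fun i => S (nth 0%N l i) &&
         all (fun c => S c ==> (dcore_to c (chosen A0 l i)
                                <= dcore_to (nth 0%N l i) (chosen A0 l i))%N)
             (iota 0 8)) (iota 0 k) ->
  greedy dex (padded S) (padded A0) (pts k l).
Proof.
move=> choices i; have /andP [Sli farthest] := all_iota_ord choices i.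
rewrite prefix_padded tnth_pts /pt; split; first by rewrite inE /= inordK ?nth_core.
case=> [c|j]; rewrite inE /= => Sc; last first.
  by rewrite dist_pad_padded dist_core_padded /= ler0n.
rewrite !dist_core_padded /= ler_nat inordK ?nth_core //.
by have /implyP := all_iota_ord farthest c; apply.
Qed.

Lemma closest_padded (S A0 : pred nat) :
  all (fun c => S c ==> match an c with
                        | Some i => all (fun c' => (A0 c' || (c' \in l)) ==>
                                           (dcore c (nth 0%N l i) <= dcore c c')%N)
                                        (iota 0 8)
                        | None => A0 c end) (iota 0 8) ->
  all (fun i => an (nth 0%N l i) == Some i) (iota 0 k) ->
  closest_assign dex (padded S) (padded A0) (pts k l) a.
Proof.
move=> closest own; split=> [[c|j]|i]; rewrite ?inE /=; first last.
- have := a_core (inord (nth 0%N l i)).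
  rewrite tnth_pts /pt inordK ?nth_core // (eqP (all_iota_ord own i)).
  by case: (a _) => [j|] //= [ij]; congr Some; exact: val_inj.
- rewrite a_pad => _; exists (inr j); first by rewrite inE.
  by move=> c' _; rewrite /dex /= eqxx ler0n.
move=> Sc; have := all_iota_ord closest c; rewrite Sc implyTb -a_core.
case: (a (inl c)) => [i|] => [nearest|A0c]; last first.
  exists (inl c); first by rewrite inE.
  by move=> c' _; rewrite /dex /= dcore_self ler0n.
move=> [b|j]; rewrite centers_padded inE /dex ler_nat tnth_pts /pt /=; last first.
  by move=> _; exact: dcore_le100.
by rewrite inordK ?nth_core // => A0b; have /implyP := all_iota_ord nearest b; apply.
Qed.

Lemma ktilde_pts (j : 'I_M) : ktilde g (pts k l) j = count (fun n => gcore n == val j) l.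
Proof.
rewrite /ktilde -(card_nth_count _ l_size); apply: eq_card => i.
by rewrite !inE tnth_pts /pt -val_eqE g_core inordK ?nth_core.
Qed.

Lemma mem_cluster_padded (S : pred nat) (t : 'I_k) (x : T) :
  x \in cluster (padded S) a t =
  if x is inl c then S c && (an c == Some (val t)) else false.
Proof.
rewrite !inE; case: x => [c|j] /=; last by rewrite a_pad.
by congr andb; rewrite -a_core; case: (a (inl c)).
Qed.

Definition edge_nat (S : pred nat) (u w : nat) : bool :=
  has (fun t => (gcore (nth 0%N l t) == u) &&
         has (fun c => S c && (an c == Some t) && (gcore c == w)) (iota 0 8))
      (iota 0 k).

Lemma edge_pts (S : pred nat) (j1 j2 : 'I_M) :
  edge (padded S) g a (pts k l) j1 j2 = edge_nat S (val j1) (val j2).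
Proof.
rewrite /edge_nat; apply/existsP/hasP.
  move=> [t /andP [gt /existsP [y /andP [yt gy]]]].
  exists (val t); first by rewrite mem_iota /= ltn_ord.
  move: gt; rewrite tnth_pts /pt -val_eqE g_core inordK ?nth_core // => ->.
  move: yt; rewrite mem_cluster_padded; case: y gy => [c|] // gc /andP [Sc act].
  apply/hasP; exists (val c); first by rewrite mem_iota /= ltn_ord.
  by rewrite Sc act -g_core (eqP gc) eqxx.
move=> [t]; rewrite mem_iota leq0n add0n => tl /andP [gt /hasP [c]].
rewrite mem_iota leq0n add0n => c_lt8 /andP [/andP [Sc act] gc].
exists (Ordinal tl); apply/andP; split.
  by rewrite tnth_pts /pt -val_eqE g_core inordK ?(nth_core (Ordinal tl)).
apply/existsP; exists (inl (inord c)); apply/andP; split.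
  by rewrite mem_cluster_padded inordK // Sc act.
by rewrite -val_eqE g_core inordK.
Qed.

Variables (G : {set 'I_M}) (Gn : pred nat).
Hypothesis G_nat : forall j, (j \in G) = Gn (val j).

Lemma Cprime_pts : Cprime g (pts k l) G = core (fun n => (n \in l) && ~~ Gn (gcore n)).
Proof.
apply/setP => x; rewrite !inE; apply/imsetP/idP.
  move=> [i]; rewrite inE tnth_pts /pt G_nat g_core inordK ?nth_core // => Gi ->.
  by rewrite /= inordK ?nth_core // mem_nth ?l_size // Gi.
case: x => [c|] //= /andP [/(nthP 0%N) [i il lic] Gc].
have ik : (i < k)%N by rewrite -l_size.
exists (Ordinal ik); first by rewrite inE G_nat tnth_pts /pt g_core /= lic inordK.
by rewrite tnth_pts /pt /= lic; congr inl; apply: val_inj; rewrite /= inordK.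
Qed.

Lemma Sprime_pts (S : pred nat) :
  Sprime (padded S) g a (pts k l) G =
  core (fun c => S c && if an c is Some t then (t < k)%N && Gn (gcore (nth 0%N l t))
                        else false).
Proof.
apply/setP => x; rewrite [RHS]inE; apply/bigcupP/idP.
  move=> [i]; rewrite G_nat tnth_pts /pt g_core inordK ?nth_core // => Gi.
  rewrite mem_cluster_padded; case: x => [c|] //= /andP [Sc /eqP ->].
  by rewrite Sc ltn_ord Gi.
case: x => [c|] //= /andP [Sc]; case ac: (an c) => [t|] // /andP [tl Gt].
exists (Ordinal tl).
  by rewrite G_nat tnth_pts /pt g_core inordK ?(nth_core (Ordinal tl)).
by rewrite mem_cluster_padded Sc ac /= eqxx.
Qed.

End ListedCenters.

Definition assign (k : nat) (an : nat -> option nat) (x : T) : option 'I_k.+1 :=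
  if x is inl c then omap inord (an c) else None.

Lemma assign_core k an :
  all (fun n => if an n is Some t then (t <= k)%N else true) (iota 0 8) ->
  forall c : 'I_8, omap val (assign k an (inl c)) = an c.
Proof.
move=> an_le c; have := all_iota_ord an_le c.
by rewrite /assign; case: (an c) => //= t t_le; rewrite inordK.
Qed.

Lemma assign_pad k an j : assign k an (inr j) = None.
Proof. by []. Qed.

Definition grp_of (gc : nat -> nat) (gc_lt3 : forall n, (gc n < 3)%N)
    (pad : 'I_M -> 'I_M) (x : T) : 'I_M :=
  match x with
  | inl c => Ordinal (leq_trans (gc_lt3 c) (isT : (3 <= M)%N))
  | inr j => pad j
  end.

Definition gcore1 (n : nat) : nat := nth 0%N [:: 1; 2; 2; 2; 0; 1; 0; 1]%N n.

Lemma gcore1_lt3 n : (gcore1 n < 3)%N.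
Proof. by rewrite /gcore1; case: n => [|[|[|[|[|[|[|[|n]]]]]]]] //=; rewrite nth_nil. Qed.

Definition grp1 : T -> 'I_M := grp_of gcore1_lt3 id.

Definition kreq (j : 'I_M) : nat := nth 0%N [:: 1; 1; 3]%N (val j).

Definition g0 : 'I_M := @Ordinal M 0 isT.
Definition g1 : 'I_M := @Ordinal M 1 isT.
Definition g2 : 'I_M := @Ordinal M 2 isT.

Lemma ksum_all : ksum kreq [set: 'I_M] = 5%N.
Proof.
rewrite /ksum (eq_bigl predT) => [|j]; last by rewrite inE.
by rewrite !big_ord_recl big1 // => i _; rewrite /kreq /= nth_nil.
Qed.

(* Top-level call: GREEDY picks 0, 7, 6, 5, 4 (the first pick breaks a tie), and the
   clusters are {0, 1, 2, 3}, {7}, {6}, {5}, {4}. *)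
Definition l1 : seq nat := [:: 0; 7; 6; 5; 4]%N.
Definition an1 (n : nat) : option nat :=
  nth None [:: Some 0; Some 0; Some 0; Some 0; Some 4; Some 3; Some 2; Some 1]%N n.
Definition a1 : T -> option 'I_5 := assign 4 an1.

Lemma a1_core (c : 'I_8) : omap val (a1 (inl c)) = an1 c.
Proof. exact: assign_core. Qed.

Lemma greedy1 : greedy dex (padded predT) (padded pred0) (pts 5 l1).
Proof. exact: greedy_padded. Qed.

Lemma closest1 : closest_assign dex (padded predT) (padded pred0) (pts 5 l1) a1.
Proof. exact: (closest_padded (l := l1) erefl erefl a1_core). Qed.

Lemma grp1_core (c : 'I_8) : val (grp1 (inl c)) = gcore1 c.
Proof. by []. Qed.

Lemma ktilde1 l (j : 'I_M) : size l = 5%N -> all (fun n => n < 8)%N l ->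
  ktilde grp1 (pts 5 l) j = count (fun n => gcore1 n == val j) l.
Proof. by move=> l_size l_core; rewrite (ktilde_pts l_size l_core grp1_core). Qed.

(* EXCHANGE on the top-level call: group 1 has a surplus and group 2 a deficit; the
   cluster of centre 0 (group 1) contains point 3 (group 2), so 0 is replaced by 3. *)
Definition l1' : seq nat := [:: 3; 7; 6; 5; 4]%N.

(* Afterwards groups 0 and 1 still have a surplus, but no cluster of a centre in
   groups 0, 1 meets group 2: the groups below 2 are closed in the graph G. *)
Lemma edge1_closed (x y : 'I_M) :
  (val x < 2)%N -> edge (padded predT) grp1 a1 (pts 5 l1') x y -> (val y < 2)%N.
Proof.
rewrite (edge_pts (l := l1') erefl erefl grp1_core a1_core) //.
by case: (val x) => [|[|u]] //; case: (val y) => [|[|[|w]]] //; vm_compute.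
Qed.

Lemma reach1_closed (x y : 'I_M) :
  (val x < 2)%N -> connect (edge (padded predT) grp1 a1 (pts 5 l1')) x y ->
  (val y < 2)%N.
Proof.
exact: (connect_forward_closed (P := fun j : 'I_M => val j < 2)%N edge1_closed).
Qed.

Lemma surplus1 (r : 'I_M) : (kreq r < ktilde grp1 (pts 5 l1') r)%N -> (val r < 2)%N.
Proof. by rewrite ktilde1 // /kreq; case: (val r) => [|[|[|v]]] //; vm_compute. Qed.

Lemma exchange1_stuck :
  ~ exchange_possible (padded predT) grp1 [set: 'I_M] kreq a1 (pts 5 l1').
Proof.
move=> [r [s [_ _ /surplus1 r_lt2 deficit_s /(reach1_closed r_lt2)]]].
by move: deficit_s; rewrite ktilde1 // /kreq; case: (val s) => [|[|v]] //; vm_compute.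
Qed.

Lemma exchange1 :
  exchange (padded predT) grp1 [set: 'I_M] kreq a1 (pts 5 l1) (pts 5 l1').
Proof.
apply: (@ex_step _ _ _ _ _ _ _ _ _ (pts 5 l1') _ g1 g2 [:: g2]); rewrite ?inE ?ktilde1 //.
- split=> [|//|[|h t] //= _ /(congr1 val) //].
  by rewrite /= andbT (edge_pts (l := l1) erefl erefl grp1_core a1_core).
- apply: chain_cons; last exact: chain_one.
  exists ord0, (pt 3); split.
  + by apply: val_inj; rewrite tnth_pts /pt /= inordK.
  + by rewrite (mem_cluster_padded a1_core (assign_pad _ _)) /pt /= inordK.
  + by apply: val_inj; rewrite /pt /= inordK.
  + by move=> i; rewrite !tnth_pts -val_eqE; case: i => -[|[|[|[|[|i]]]]].
- exact: ex_stop exchange1_stuck.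
Qed.

(* EXCHANGE returns the groups {0, 1}: they have a surplus and reach only each other. *)
Definition G01 : {set 'I_M} := [set g0; g1].

Lemma in_G01 (j : 'I_M) : (j \in G01) = (val j < 2)%N.
Proof. by rewrite !inE -!val_eqE; case: j => [[|[|v]] ?]. Qed.

Lemma exG1 : exG (padded predT) grp1 [set: 'I_M] kreq a1 (pts 5 l1') = G01.
Proof.
rewrite /exG ifF; last by apply/negbTE/forallP => /(_ g2); rewrite inE ktilde1.
apply/setP => j; rewrite in_G01 !inE; apply/existsP/idP.
  by move=> [i /and3P [_ /surplus1 i_lt2 /(reach1_closed i_lt2)]].
move=> j_lt2; exists j; rewrite inE connect0 andbT.
by move: j_lt2; rewrite ktilde1 // /kreq; case: (val j) => [|[|v]].
Qed.

(* The recursive call runs on S' u C' u C0 = {7, 6, 5, 4, 3} plus padding, with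
   initial centres C' u C0 = {3} plus padding, and point 3 moved to group 0. *)
Definition S2 : pred nat := fun n => n \in [:: 7; 6; 5; 4; 3]%N.
Definition A2 : pred nat := pred1 3%N.

Lemma Cprime1 : Cprime grp1 (pts 5 l1') G01 = core A2.
Proof.
rewrite (Cprime_pts (l := l1') erefl erefl grp1_core (Gn := fun v => v < 2)%N in_G01).
by apply/setP => -[c|j]; rewrite !inE //=; case: c => -[|[|[|[|[|[|[|[|c]]]]]]]].
Qed.

Lemma initial2 : Cprime grp1 (pts 5 l1') G01 :|: padded pred0 = padded A2.
Proof. by rewrite Cprime1; apply/setP => -[c|j]; rewrite !inE /= ?orbF. Qed.

Lemma points2 :
  Sprime (padded predT) grp1 a1 (pts 5 l1') G01 :|: Cprime grp1 (pts 5 l1') G01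
    :|: padded pred0 = padded S2.
Proof.
rewrite -setUA initial2.
rewrite (Sprime_pts (l := l1') erefl erefl grp1_core a1_core (assign_pad _ _)
           (Gn := fun v => v < 2)%N in_G01).
by apply/setP => -[c|j]; rewrite !inE //=; case: c => -[|[|[|[|[|[|[|[|c]]]]]]]].
Qed.

Definition gcore2 (n : nat) : nat := if n == 3%N then 0%N else gcore1 n.

Lemma gcore2_lt3 n : (gcore2 n < 3)%N.
Proof. by rewrite /gcore2; case: (n == 3%N) => //; exact: gcore1_lt3. Qed.

Definition grp2 : T -> 'I_M := grp_of gcore2_lt3 (fun=> g0).

Lemma grp2_core (c : 'I_8) : val (grp2 (inl c)) = gcore2 c.
Proof. by []. Qed.

Lemma ktilde2 l (j : 'I_M) : size l = 2%N -> all (fun n => n < 8)%N l ->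
  ktilde grp2 (pts 2 l) j = count (fun n => gcore2 n == val j) l.
Proof. by move=> l_size l_core; rewrite (ktilde_pts l_size l_core grp2_core). Qed.

(* In the recursive call GREEDY picks 6 then 4 (both after ties), with clusters
   {7, 6, 5} and {4}; both centres lie in group 0. *)
Definition l2 : seq nat := [:: 6; 4]%N.
Definition an2 (n : nat) : option nat :=
  nth None [:: None; None; None; None; Some 1; Some 0; Some 0; Some 0]%N n.
Definition a2 : T -> option 'I_2 := assign 1 an2.

Lemma a2_core (c : 'I_8) : omap val (a2 (inl c)) = an2 c.
Proof. exact: assign_core. Qed.

Lemma greedy2 : greedy dex (padded S2) (padded A2) (pts 2 l2).
Proof. exact: greedy_padded. Qed.

Lemma closest2 : closest_assign dex (padded S2) (padded A2) (pts 2 l2) a2.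
Proof. exact: (closest_padded (l := l2) erefl erefl a2_core). Qed.

(* EXCHANGE replaces 6 by 5 (group 1), after which both groups are balanced. *)
Definition l2' : seq nat := [:: 5; 4]%N.

Lemma exchange2_balanced j : j \in G01 -> ktilde grp2 (pts 2 l2') j = kreq j.
Proof. by rewrite in_G01 ktilde2 // /kreq; case: (val j) => [|[|v]]. Qed.

Lemma exchange2 : exchange (padded S2) grp2 G01 kreq a2 (pts 2 l2) (pts 2 l2').
Proof.
apply: (@ex_step _ _ _ _ _ _ _ _ _ (pts 2 l2') _ g0 g1 [:: g1]);
  rewrite ?in_G01 ?ktilde2 //.
- split=> [|//|[|h t] //= _ /(congr1 val) //].
  by rewrite /= andbT (edge_pts (l := l2) erefl erefl grp2_core a2_core).
- apply: chain_cons; last exact: chain_one.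
  exists ord0, (pt 5); split.
  + by apply: val_inj; rewrite tnth_pts /pt /= inordK.
  + by rewrite (mem_cluster_padded a2_core (assign_pad _ _)) /pt /= inordK.
  + by apply: val_inj; rewrite /pt /= inordK.
  + by move=> i; rewrite !tnth_pts -val_eqE; case: i => -[|[|i]].
- apply: ex_stop => -[r [s [G01r _ surplus_r _ _]]].
  by move: surplus_r; rewrite exchange2_balanced // ltnn.
Qed.

Lemma exG2 : exG (padded S2) grp2 G01 kreq a2 (pts 2 l2') = set0.
Proof.
rewrite /exG ifT //; apply/forall_inP => j G01j.
by rewrite exchange2_balanced.
Qed.

Lemma ksum_G01 : ksum kreq G01 = 2%N.
Proof. by rewrite /ksum big_setU1 ?big_set1 // inE -val_eqE. Qed.

Lemma run2 : multigroup dex kreq (padded S2) grp2 G01 (padded A2) (centers (pts 2 l2')).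
Proof.
apply: (multigroup_exch_at ksum_G01 _ greedy2 closest2 exchange2 exG2).
by rewrite cards2 -val_eqE.
Qed.

(* Back in the top-level call, group 2 (not in {0, 1}) needs 3 - |C' n S_2| = 2 more
   centres; the algorithm may add 1 and 2.  The other groups need none. *)
Definition added (j : 'I_M) : {set T} :=
  if val j == 2%N then core (fun n => n \in [:: 1; 2]%N) else set0.

Lemma added_spec (j : 'I_M) : j \in [set: 'I_M] :\: G01 ->
  added j \subset grpset (padded predT) grp1 j :\: Cprime grp1 (pts 5 l1') G01 /\
  #|added j| =
    (kreq j - #|Cprime grp1 (pts 5 l1') G01 :&: grpset (padded predT) grp1 j|)%N.
Proof.
rewrite in_setD in_setT andbT in_G01 Cprime1 /added -leqNgt.
case: eqP => [j2 _ | j_ne2 j_ge2].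
  split.
    apply/subsetP => -[c|i]; rewrite !inE //= -val_eqE /= j2.
    by case: c => -[|[|[|[|c]]]].
  have -> : core A2 :&: grpset (padded predT) grp1 j = core (pred1 3%N).
    apply/setP => -[c|i]; rewrite !inE //= -val_eqE /= j2.
    by case: c => -[|[|[|[|c]]]].
  by rewrite !card_core /kreq j2.
split; first exact: sub0set.
rewrite cards0 /kreq; move: j_ne2 j_ge2.
by case: (val j) => [|[|[|v]]] //=; rewrite nth_nil.
Qed.

Definition CA : {set T} :=
  centers (pts 2 l2') :|: Cprime grp1 (pts 5 l1') G01
    :|: \bigcup_(j in [set: 'I_M] :\: G01) added j.

Lemma padded_all : padded predT = [set: T].
Proof. by apply/setP => -[c|j]; rewrite !inE. Qed.

Lemma run1 : multigroup dex kreq [set: T] grp1 [set: 'I_M] (padded pred0) CA.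
Proof.
rewrite -padded_all.
apply: (multigroup_rec_at ksum_all _ greedy1 closest1 exchange1 exG1 (grp' := grp2)).
- by rewrite cardsT card_ord.
- by apply/set0Pn; exists g0; rewrite in_G01.
- move=> x; rewrite initial2 inE in_G01; case: x => [c|j] //=.
  by rewrite /gcore2 /A2 /= => ->.
- move=> x; rewrite initial2 inE; case: x => [c|//] /= c_ne3; apply: val_inj.
  by move: c_ne3; rewrite /= /gcore2 /A2 /= => /negbTE ->.
- by rewrite points2 initial2; exact: run2.
- exact: added_spec.
Qed.

(* Point 7 is at distance at least 8 from every point of {5, 4, 3, 1, 2}. *)
Lemma cost_CA : ole (Some 8%:R) (cost dex [set: T] (CA :|: padded pred0)).
Proof.
have CA_sub : CA :|: padded pred0 \subset padded (fun n => n \in [:: 5; 4; 3; 1; 2]%N).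
  apply/subsetP => x; rewrite /CA !inE => /orP [/orP [/orP [/imsetP [i _ ->]|]|]|].
  - by rewrite tnth_pts /pt /= inordK; case: i => -[|[|i]].
  - by rewrite Cprime1 !inE; case: x => [c|] //= /eqP ->.
  - move=> /bigcupP [j _]; rewrite /added; case: ifP => _; last by rewrite inE.
    by rewrite inE; case: x => [[[|[|[|c]]] ?]|].
  - by case: x.
apply: (bigomax_ge (i := pt 7)); first by rewrite inE.
apply: ole_trans _ (dist_antitone _ _ CA_sub).
by rewrite /pt dist_core_padded /= ler_nat inordK.
Qed.

Definition star : pred nat := fun n => n \in [:: 6; 7; 3; 1; 2]%N.
Definition Cstar : {set T} := core star.

Lemma Cstar_feasible : feasible grp1 kreq Cstar.
Proof.
apply/forallP => j.
have -> : Cstar :&: [set x | grp1 x == j] =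
          core (fun n => star n && (gcore1 n == val j)).
  by apply/setP => -[c|i]; rewrite !inE // -val_eqE.
by rewrite card_core /kreq; case: (val j) => [|[|[|v]]] //; rewrite /= nth_nil; vm_compute.
Qed.

Lemma r_fair_bounds :
  ole (Some 0) (r_fair dex grp1 kreq (padded pred0)) /\
  ole (r_fair dex grp1 kreq (padded pred0)) (Some 1).
Proof.
split; first by apply: bigomin_ge => C _; exact: bigomax_ge0.
apply: ole_trans (bigomin_le _ Cstar_feasible) _.
have -> : Cstar :|: padded pred0 = padded star.
  by apply/setP => -[c|j]; rewrite !inE //= orbF.
apply: bigomax_le => [|[c|j] _]; first by rewrite /= ler01.
  rewrite dist_core_padded /= -[1 : R]/(1%N%:R) ler_nat.
  exact: (all_iota_ord (k := 8) (P := fun c => dcore_to c star <= 1)%N erefl c).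
by rewrite dist_pad_padded /= ler01.
Qed.

End Instance.

Theorem lemma3 (R : realFieldType) (m : nat) (eps : R) :
  (3 <= m)%N -> 0 < eps ->
  exists (T : finType) (d : T -> T -> R) (grp : T -> 'I_m)
         (kreq : 'I_m -> nat) (C0 CA : {set T}),
    [/\ is_metric d,
        forall j : 'I_m, exists x : T, grp x = j,
        multigroup d kreq [set: T] grp [set: 'I_m] C0 CA
      & olt (oscale (8 - eps) (r_fair d grp kreq C0))
            (cost d [set: T] (CA :|: C0))].
Proof.
case: m => [|[|[|m']]] // _ eps_gt0.
exists ('I_8 + 'I_m'.+3)%type, (@dex R m'), (@grp1 m'), (@kreq m'),
  (padded m' pred0), (@CA m').
have [opt_ge0 opt_le1] := r_fair_bounds R m'.
split; first exact: dex_metric.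
- by move=> j; exists (inr j).
- exact: run1.
- exact: ratio_exceeds (ltr0n _ 8) eps_gt0 opt_ge0 opt_le1 (cost_CA R m').
Qed.
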